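(* Let $\beta>2\alpha>0$ with $\beta+2\alpha>1$ and $t\in\mathbb{R}^{s_N}$. For all $r>0$ sufficiently small (depending on $A$), $$\frac{J_N(t,r,\overrightarrow{m}^* )}{J_N(0,r,\overrightarrow{m}^* )}=\mathbb{E}_{\rho_N}\big[\exp\{t^TX\}\big],$$ where $X$ is an $s_N$-dimensional random variable whose distribution is strongly log-concave with density $$\rho_N(x)\propto\exp\Big\{-\tfrac{N}{s_N}\Big(\varphi_N\Big(\overrightarrow{m}^*+\sqrt{\tfrac{s_N}{N}}x\Big)-\varphi_N(\overrightarrow{m}^* )\Big)\Big\}\mathbf{1}_{[-\sqrt{N/s_N}\,r,\ \sqrt{N/s_N}\,r]^{s_N}}(x).$$
   Context: $A=\beta I+\alpha(P+P^T)$ is the $s_N\times s_N$ symmetric circulant matrix ($P$ the cyclic shift), $e_k$ the standard basis of $\mathbb{R}^{s_N}$, and $\varphi_N(x)=\frac12x^TAx-\sum_{k=1}^{s_N}\log\cosh(x^TAe_k)$. $m^*$ is the largest solution of $x=\tanh((\beta+2\alpha)x)$ and $\overrightarrow{m}^*=(m^*,\dots,m^* )\in\mathbb{R}^{s_N}$. For $t\in\mathbb{R}^{s_N}$ and $r>0$, $$J_N(t,r,\overrightarrow{m}^* )=\Big(\tfrac{N}{s_N}\Big)^{s_N/2}\exp\Big\{\tfrac{N}{s_N}\varphi_N(\overrightarrow{m}^* )-\sqrt{\tfrac{N}{s_N}}t^T\overrightarrow{m}^*\Big\}\int_{[m^*-r,m^*+r]^{s_N}}\exp\Big\{-\tfrac{N}{s_N}\varphi_N(x)+\sqrt{\tfrac{N}{s_N}}t^Tx\Big\}\mathrm{d}^{s_N}x.$$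 A distribution is strongly log-concave if it has a density $e^{-U}$ with $U$ strongly convex. *)

From Stdlib Require Import Reals Lra ClassicalEpsilon.
From Coquelicot Require Import Coquelicot.
Open Scope R_scope.

(* Vectors of R^s are represented as functions nat -> R; only the
   coordinates 0 .. s-1 are relevant. *)

Fixpoint rsum (n : nat) (f : nat -> R) : R :=
  match n with O => 0 | S k => rsum k f + f k end.

Definition dot (s : nat) (x y : nat -> R) : R := rsum s (fun k => x k * y k).

Definition sqnorm (s : nat) (x : nat -> R) : R := dot s x x.

(* (A x)_k for A = beta I + alpha (P + P^T), P the cyclic shift on R^s:
   (P x)_k = x_{k+1 mod s}, (P^T x)_k = x_{k-1 mod s}.  Since A is
   symmetric, x^T A e_k = (A x)_k. *)
Definition Amul (s : nat) (alpha beta : R) (x : nat -> R) (k : nat) : R :=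
  beta * x k + alpha * (x ((k + 1) mod s)%nat + x ((k + s - 1) mod s)%nat).

Definition phiN (s : nat) (alpha beta : R) (x : nat -> R) : R :=
  / 2 * dot s x (Amul s alpha beta x)
  - rsum s (fun k => ln (cosh (Amul s alpha beta x k))).

Definition cst (c : R) : nat -> R := fun _ => c.

Definition upd (x : nat -> R) (k : nat) (y : R) : nat -> R :=
  fun i => if Nat.eqb i k then y else x i.

Fixpoint boxint (n : nat) (a b : R) (f : (nat -> R) -> R) : R :=
  match n with
  | O => f (cst 0)
  | S k => RInt (fun y => boxint k a b (fun x => f (upd x k y))) a b
  end.

Definition in_box (s : nat) (a b : R) (x : nat -> R) : Prop :=
  forall k, (k < s)%nat -> a <= x k <= b.

Definition JN (s N : nat) (alpha beta : R) (t : nat -> R) (r mstar : R) : R :=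
  let c := INR N / INR s in
  (sqrt c) ^ s
  * exp (c * phiN s alpha beta (cst mstar) - sqrt c * dot s t (cst mstar))
  * boxint s (mstar - r) (mstar + r)
      (fun x => exp (- c * phiN s alpha beta x + sqrt c * dot s t x)).

(* unnormalised density of rho_N (without the indicator; the indicator is
   taken into account by integrating over the box / in rhoN below) *)
Definition rho_core (s N : nat) (alpha beta mstar : R) (x : nat -> R) : R :=
  let c := INR N / INR s in
  exp (- c * (phiN s alpha beta (fun k => mstar + sqrt (INR s / INR N) * x k)
              - phiN s alpha beta (cst mstar))).

Definition rho_box_radius (s N : nat) (r : R) : R := sqrt (INR N / INR s) * r.

Definition rho_Z (s N : nat) (alpha beta mstar r : R) : R :=
  let R0 := rho_box_radius s N r in
  boxint s (- R0) R0 (rho_core s N alpha beta mstar).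

Definition rhoN (s N : nat) (alpha beta mstar r : R) (x : nat -> R) : R :=
  let R0 := rho_box_radius s N r in
  (rho_core s N alpha beta mstar x / rho_Z s N alpha beta mstar r)
  * (if excluded_middle_informative (in_box s (- R0) R0 x) then 1 else 0).

(* E_{rho_N}[exp(t^T X)]; rhoN vanishes off the box, so integrating over the
   box is integrating over R^s *)
Definition expect_exp (s N : nat) (alpha beta mstar r : R) (t : nat -> R) : R :=
  let R0 := rho_box_radius s N r in
  boxint s (- R0) R0 (fun x => exp (dot s t x) * rhoN s N alpha beta mstar r x).

Definition lincomb (l : R) (x y : nat -> R) : nat -> R :=
  fun k => l * x k + (1 - l) * y k.

Definition convex_set (s : nat) (K : (nat -> R) -> Prop) : Prop :=
  forall x y l, K x -> K y -> 0 <= l <= 1 -> K (lincomb l x y).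

Definition strongly_convex_on (s : nat) (K : (nat -> R) -> Prop)
  (U : (nat -> R) -> R) : Prop :=
  exists c, 0 < c /\
  forall x y l, K x -> K y -> 0 <= l <= 1 ->
    U (lincomb l x y) <= l * U x + (1 - l) * U y
                         - c / 2 * l * (1 - l) * sqnorm s (fun k => x k - y k).

(* A density rho on R^s is strongly log-concave: rho = e^{-U} with U strongly
   convex (U extended-valued, = +oo outside a convex set K). *)
Definition strongly_log_concave (s : nat) (rho : (nat -> R) -> R) : Prop :=
  exists (K : (nat -> R) -> Prop) (U : (nat -> R) -> R),
    convex_set s K /\ strongly_convex_on s K U /\
    (forall x, K x -> rho x = exp (- U x)) /\
    (forall x, ~ K x -> rho x = 0).

From Stdlib Require Import Reals Lra Lia Psatz FunctionalExtensionality Classical ClassicalEpsilon.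
From Coquelicot Require Import Coquelicot.
Open Scope R_scope.

(* After the substitution x = mstar + sqrt (s/N) y, J_N(t, r, mstar) is the
   integral of exp (t^T y) against the unnormalised density of rho_N over the box
   [-sqrt (N/s) r, sqrt (N/s) r]^s, so J_N(t)/J_N(0) is the expectation as soon as
   the normaliser is positive; it is, because the integrand is positive and
   Lipschitz, so that its iterated sections are continuous.

   Strong log-concavity is strong convexity of phi_N near mstar. For
   arguments >= u0 >= 0 the convexity defect of ln cosh is at most q times that of
   a^2/2 whenever 1 - tanh u0 ^ 2 <= q, so phi_N is at least as convex as the form
   x^T (A - q A^2) x / 2. The spectrum of A lies in [beta - 2 alpha, beta + 2 alpha],
   where x - q x^2 > 0 once q (beta + 2 alpha) < 1. Such a q is available because
   the slope (beta + 2 alpha) (1 - mstar^2) of the fixed-point map is below 1 at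
   its largest fixed point, and for small r every (A x)_k on the box is close to
   (beta + 2 alpha) mstar. *)

(* Coquelicot's [RInt] is 0 on non-integrable functions, which makes scaling
   and affine substitution valid without integrability hypotheses. *)
Lemma RInt_not_ex (f : R -> R) a b : ~ ex_RInt f a b -> RInt f a b = 0.
Proof.
  intros Hf. unfold RInt, iota, lim; simpl. unfold R_complete_lim.
  set (E := fun x : R => _).
  assert (HE : forall x, E x) by (intros x y Hy; exfalso; apply Hf; now exists y).
  destruct (Lub_Rbar_correct E) as [Hub _].
  destruct (Lub_Rbar E) as [l| |]; try reflexivity.
  exfalso. specialize (Hub (l + 1) (HE _)). simpl in Hub. lra.
Qed.

Lemma RInt_scal_total (f : R -> R) a b l :
  RInt (fun x => l * f x) a b = l * RInt f a b.
Proof.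
  destruct (Req_dec l 0) as [->|Hl].
  { rewrite Rmult_0_l, (RInt_ext _ (fun _ => 0)) by (intros; apply Rmult_0_l).
    rewrite RInt_const. apply Rmult_0_r. }
  destruct (classic (ex_RInt f a b)) as [Hf|Hf].
  - exact (RInt_scal f a b l Hf).
  - rewrite (RInt_not_ex f a b Hf), Rmult_0_r. apply RInt_not_ex.
    intros Hlf. apply Hf, (ex_RInt_ext (fun x => / l * (l * f x))).
    + intros x _. now rewrite <- Rmult_assoc, Rinv_l, Rmult_1_l.
    + exact (ex_RInt_scal _ _ _ (/ l) Hlf).
Qed.

Lemma RInt_comp_lin_total (f : R -> R) u v a b : u <> 0 ->
  RInt (fun y => u * f (u * y + v)) a b = RInt f (u * a + v) (u * b + v).
Proof.
  intros Hu. destruct (classic (ex_RInt f (u * a + v) (u * b + v))) as [Hf|Hf].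
  - exact (RInt_comp_lin f u v a b Hf).
  - rewrite (RInt_not_ex f _ _ Hf). apply RInt_not_ex.
    intros Hfu. apply Hf, (ex_RInt_ext (fun x => / u * (u * f (u * (/ u * x + - v / u) + v)))).
    { intros x _. replace (u * (/ u * x + - v / u) + v) with x by now field.
      now rewrite <- Rmult_assoc, Rinv_l, Rmult_1_l. }
    apply (ex_RInt_comp_lin (fun y => u * f (u * y + v)) (/ u) (- v / u)).
    replace (/ u * (u * a + v) + - v / u) with a by now field.
    replace (/ u * (u * b + v) + - v / u) with b by now field.
    exact Hfu.
Qed.

Lemma rsum_ext n f g : (forall k, (k < n)%nat -> f k = g k) -> rsum n f = rsum n g.
Proof.
  induction n as [|n IH]; intros H; simpl; [reflexivity|].
  rewrite IH, H; [reflexivity|lia|intros; apply H; lia].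
Qed.

Lemma rsum_plus n f g : rsum n (fun k => f k + g k) = rsum n f + rsum n g.
Proof. induction n as [|n IH]; simpl; [ring|]. rewrite IH. ring. Qed.

Lemma rsum_minus n f g : rsum n (fun k => f k - g k) = rsum n f - rsum n g.
Proof. induction n as [|n IH]; simpl; [ring|]. rewrite IH. ring. Qed.

Lemma rsum_scal n c f : rsum n (fun k => c * f k) = c * rsum n f.
Proof. induction n as [|n IH]; simpl; [ring|]. rewrite IH. ring. Qed.

Lemma rsum_const n c : rsum n (fun _ => c) = INR n * c.
Proof. induction n as [|n IH]; simpl rsum; [simpl; ring|]. rewrite IH, S_INR. ring. Qed.

Lemma rsum_le n f g : (forall k, (k < n)%nat -> f k <= g k) -> rsum n f <= rsum n g.
Proof.
  induction n as [|n IH]; intros H; simpl; [lra|].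
  apply Rplus_le_compat; [apply IH; intros; apply H|apply H]; lia.
Qed.

Lemma rsum_nonneg n f : (forall k, (k < n)%nat -> 0 <= f k) -> 0 <= rsum n f.
Proof. intros H. rewrite <- (Rmult_0_r (INR n)), <- rsum_const. now apply rsum_le. Qed.

Lemma rsum_abs n f : Rabs (rsum n f) <= rsum n (fun k => Rabs (f k)).
Proof.
  induction n as [|n IH]; simpl; [rewrite Rabs_R0; lra|].
  eapply Rle_trans; [apply Rabs_triang|lra].
Qed.

Lemma rsum_ge_term n f j : (forall k, (k < n)%nat -> 0 <= f k) -> (j < n)%nat ->
  f j <= rsum n f.
Proof.
  induction n as [|n IH]; intros H Hj; [lia|simpl].
  destruct (Nat.eq_dec j n) as [->|Hne].
  - assert (0 <= rsum n f) by (apply rsum_nonneg; intros; apply H; lia). lra.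
  - assert (f j <= rsum n f) by (apply IH; [intros; apply H|]; lia).
    assert (0 <= f n) by (apply H; lia). lra.
Qed.

Lemma rsum_succ_first n f : rsum (S n) f = f 0%nat + rsum n (fun k => f (S k)).
Proof.
  induction n as [|n IH]; [simpl; ring|].
  change (rsum (S (S n)) f) with (rsum (S n) f + f (S n)). rewrite IH. simpl. ring.
Qed.

Lemma rsum_rot_next s f : (0 < s)%nat -> rsum s (fun k => f ((k + 1) mod s)%nat) = rsum s f.
Proof.
  intros Hs. destruct s as [|n]; [lia|].
  rewrite (rsum_succ_first n f). cbn [rsum].
  replace ((n + 1) mod S n)%nat with 0%nat
    by (replace (n + 1)%nat with (S n) by lia; now rewrite Nat.Div0.mod_same).
  rewrite (rsum_ext n _ (fun k => f (S k))); [ring|].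
  intros k Hk. rewrite Nat.mod_small by lia. f_equal. lia.
Qed.

Lemma rsum_rot_prev s f : (0 < s)%nat -> rsum s (fun k => f ((k + s - 1) mod s)%nat) = rsum s f.
Proof.
  intros Hs. destruct s as [|n]; [lia|].
  rewrite rsum_succ_first. cbn [rsum].
  replace ((0 + S n - 1) mod S n)%nat with n by (rewrite Nat.mod_small; lia).
  rewrite (rsum_ext n _ f); [ring|].
  intros k Hk. f_equal. replace (S k + S n - 1)%nat with (k + 1 * S n)%nat by lia.
  rewrite Nat.Div0.mod_add. apply Nat.mod_small. lia.
Qed.

Lemma in_box_upd n a b x y : in_box n a b x -> a <= y <= b -> in_box (S n) a b (upd x n y).
Proof. intros Hx Hy k Hk. unfold upd. destruct (Nat.eqb_spec k n); auto. apply Hx. lia. Qed.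

Lemma in_box_convex n a b : convex_set n (in_box n a b).
Proof.
  intros x y l Hx Hy Hl k Hk. unfold lincomb.
  specialize (Hx k Hk). specialize (Hy k Hk). nra.
Qed.

Lemma boxint_ext n a b f g : a <= b -> (forall x, in_box n a b x -> f x = g x) ->
  boxint n a b f = boxint n a b g.
Proof.
  revert f g; induction n as [|n IH]; intros f g Hab H; simpl.
  - apply H. intros k Hk; lia.
  - apply RInt_ext. intros y Hy. rewrite Rmin_left, Rmax_right in Hy by lra.
    apply IH; auto. intros x Hx. apply H, in_box_upd; auto; lra.
Qed.

Lemma boxint_scal n a b l f : boxint n a b (fun x => l * f x) = l * boxint n a b f.
Proof.
  revert f; induction n as [|n IH]; intros f; simpl; [reflexivity|].
  rewrite <- RInt_scal_total. apply RInt_ext. intros y _. apply IH.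
Qed.

Definition depends_on (n : nat) (f : (nat -> R) -> R) : Prop :=
  forall x y, (forall k, (k < n)%nat -> x k = y k) -> f x = f y.

Lemma boxint_affine n u v a b f : u <> 0 -> depends_on n f ->
  boxint n (u * a + v) (u * b + v) f
  = u ^ n * boxint n a b (fun y => f (fun k => v + u * y k)).
Proof.
  revert f; induction n as [|n IH]; intros f Hu Hf; simpl.
  - rewrite Rmult_1_l. apply Hf. intros; lia.
  - rewrite <- (RInt_comp_lin_total _ u v a b Hu), <- RInt_scal_total.
    apply RInt_ext. intros y _. rewrite IH, Rmult_assoc; auto.
    + do 3 f_equal. extensionality x. f_equal. extensionality k.
      unfold upd. destruct (Nat.eqb k n); ring.
    + intros x x' H. apply Hf. intros k Hk. unfold upd.
      destruct (Nat.eqb_spec k n); auto. apply H. lia.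
Qed.

Definition dist1 (n : nat) (x y : nat -> R) : R := rsum n (fun k => Rabs (x k - y k)).

Definition lipschitz_on_box (n : nat) (a b : R) (f : (nat -> R) -> R) : Prop :=
  exists L, 0 <= L /\ forall x y, in_box n a b x -> in_box n a b y ->
    Rabs (f x - f y) <= L * dist1 n x y.

Lemma dist1_nonneg n x y : 0 <= dist1 n x y.
Proof. apply rsum_nonneg. intros. apply Rabs_pos. Qed.

Lemma dist1_refl n x : dist1 n x x = 0.
Proof.
  unfold dist1. rewrite (rsum_ext n _ (fun _ => 0)), rsum_const; [apply Rmult_0_r|].
  intros. rewrite Rminus_diag. apply Rabs_R0.
Qed.

Lemma dist1_affine n m u x y : 0 <= u ->
  dist1 n (fun k => m + u * x k) (fun k => m + u * y k) = u * dist1 n x y.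
Proof.
  intros Hu. unfold dist1. rewrite <- rsum_scal. apply rsum_ext. intros k _.
  replace (m + u * x k - (m + u * y k)) with (u * (x k - y k)) by ring.
  now rewrite Rabs_mult, (Rabs_pos_eq u).
Qed.

Lemma dist1_upd n x x' y y' :
  dist1 (S n) (upd x n y) (upd x' n y') = dist1 n x x' + Rabs (y - y').
Proof.
  unfold dist1, upd. cbn [rsum]. rewrite Nat.eqb_refl. f_equal.
  apply rsum_ext. intros k Hk. destruct (Nat.eqb_spec k n); [lia|reflexivity].
Qed.

Lemma lipschitz_on_box_upd n a b f y : lipschitz_on_box (S n) a b f -> a <= y <= b ->
  lipschitz_on_box n a b (fun x => f (upd x n y)).
Proof.
  intros [L [HL Hf]] Hy. exists L. split; [exact HL|]. intros x x' Hx Hx'.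
  eapply Rle_trans; [apply Hf; apply in_box_upd; auto|].
  rewrite dist1_upd, Rminus_diag, Rabs_R0, Rplus_0_r. lra.
Qed.

Lemma lipschitz_continuous (h : R -> R) K : 0 <= K ->
  (forall y y', Rabs (h y - h y') <= K * Rabs (y - y')) -> forall x, continuous h x.
Proof.
  intros HK Hh x. apply continuity_pt_filterlim. intros eps Heps.
  exists (eps / (K + 1)). split; [apply Rdiv_lt_0_compat; lra|].
  intros y [_ Hy]. simpl in *. unfold R_dist in *.
  eapply Rle_lt_trans; [apply Hh|].
  apply Rle_lt_trans with (K * (eps / (K + 1))).
  - apply Rmult_le_compat_l; lra.
  - apply Rmult_lt_reg_r with (K + 1); [lra|]. field_simplify; lra.
Qed.

Definition clamp (a b y : R) : R := Rmax a (Rmin b y).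

Lemma clamp_in a b y : a <= b -> a <= clamp a b y <= b.
Proof. intros. unfold clamp, Rmax, Rmin. repeat destruct Rle_dec; lra. Qed.

Lemma clamp_id a b y : a <= y <= b -> clamp a b y = y.
Proof. intros. unfold clamp, Rmax, Rmin. repeat destruct Rle_dec; lra. Qed.

Lemma clamp_lipschitz a b y y' : Rabs (clamp a b y - clamp a b y') <= Rabs (y - y').
Proof.
  unfold clamp, Rmax, Rmin. repeat destruct Rle_dec; unfold Rabs; repeat destruct Rcase_abs; lra.
Qed.

Section BoxintLipschitz.

Variables a b : R.
Hypothesis Hab : a < b.

Definition boxint_sup_bound (n : nat) : Prop :=
  forall f g eps, lipschitz_on_box n a b f -> lipschitz_on_box n a b g ->
    (forall x, in_box n a b x -> Rabs (f x - g x) <= eps) ->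
    Rabs (boxint n a b f - boxint n a b g) <= (b - a) ^ n * eps.

(* The outer variable is clamped to [a, b] so that the section is Lipschitz,
   hence continuous, on all of R. *)
Definition boxint_section n (f : (nat -> R) -> R) (y : R) : R :=
  boxint n a b (fun x => f (upd x n (clamp a b y))).

Lemma boxint_S_section n f : boxint (S n) a b f = RInt (boxint_section n f) a b.
Proof.
  apply RInt_ext. intros y Hy. rewrite Rmin_left, Rmax_right in Hy by lra.
  unfold boxint_section. rewrite clamp_id by lra. reflexivity.
Qed.

Lemma boxint_section_continuous n f : boxint_sup_bound n ->
  lipschitz_on_box (S n) a b f -> forall y, continuous (boxint_section n f) y.
Proof.
  intros Hbound Hf. pose proof Hf as [L [HL HLf]].
  apply (lipschitz_continuous _ ((b - a) ^ n * L)).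
  { apply Rmult_le_pos; [apply pow_le|]; lra. }
  intros y y'. pose proof (clamp_in a b y). pose proof (clamp_in a b y').
  eapply Rle_trans.
  - apply Hbound with (eps := L * Rabs (clamp a b y - clamp a b y'));
      try (apply lipschitz_on_box_upd; [exact Hf|lra]).
    intros x Hx. eapply Rle_trans; [apply HLf; apply in_box_upd; auto; lra|].
    rewrite dist1_upd, dist1_refl. lra.
  - rewrite Rmult_assoc. apply Rmult_le_compat_l; [apply pow_le; lra|].
    apply Rmult_le_compat_l; [exact HL|apply clamp_lipschitz].
Qed.

Lemma boxint_lipschitz_sup_bound n : boxint_sup_bound n.
Proof.
  induction n as [|n IH]; intros f g eps Hf Hg H.
  - simpl. rewrite Rmult_1_l. apply H. intros k Hk; lia.
  - rewrite !boxint_S_section.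
    assert (If : ex_RInt (boxint_section n f) a b)
      by (apply (ex_RInt_continuous (V := R_CompleteNormedModule)); intros;
          now apply boxint_section_continuous).
    assert (Ig : ex_RInt (boxint_section n g) a b)
      by (apply (ex_RInt_continuous (V := R_CompleteNormedModule)); intros;
          now apply boxint_section_continuous).
    assert (Hm := RInt_minus _ _ _ _ If Ig).
    change (RInt (fun y => boxint_section n f y - boxint_section n g y) a b
            = RInt (boxint_section n f) a b - RInt (boxint_section n g) a b) in Hm.
    rewrite <- Hm.
    replace ((b - a) ^ S n * eps) with ((b - a) * ((b - a) ^ n * eps)) by (simpl; ring).
    apply abs_RInt_le_const; [lra|apply (ex_RInt_minus (V := R_NormedModule)); assumption|].
    intros y Hy. pose proof (clamp_in a b y). apply IH.
    + apply lipschitz_on_box_upd; [exact Hf|lra].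
    + apply lipschitz_on_box_upd; [exact Hg|lra].
    + intros x Hx. apply H, in_box_upd; auto; lra.
Qed.

Lemma boxint_pos n f : lipschitz_on_box n a b f -> (forall x, in_box n a b x -> 0 < f x) ->
  0 < boxint n a b f.
Proof.
  revert f. induction n as [|n IH]; intros f Hf H.
  - apply H. intros k Hk; lia.
  - rewrite boxint_S_section. apply RInt_gt_0; [exact Hab| |].
    + intros y Hy. pose proof (clamp_in a b y). apply IH.
      * apply lipschitz_on_box_upd; [exact Hf|lra].
      * intros x Hx. apply H, in_box_upd; auto; lra.
    + intros y _. apply boxint_section_continuous; [apply boxint_lipschitz_sup_bound|exact Hf].
Qed.

End BoxintLipschitz.

Lemma mean_value (f df : R -> R) u v : (forall x, is_derive f x (df x)) ->
  exists c, Rmin u v <= c <= Rmax u v /\ f v - f u = df c * (v - u).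
Proof.
  intros Hd. apply MVT_gen; intros x _; [apply Hd|].
  apply derivable_continuous_pt. exists (df x). apply is_derive_Reals, Hd.
Qed.

Lemma lipschitz_of_derive_bound (f df : R -> R) K u v : (forall x, is_derive f x (df x)) ->
  (forall x, Rmin u v <= x <= Rmax u v -> Rabs (df x) <= K) ->
  Rabs (f u - f v) <= K * Rabs (u - v).
Proof.
  intros Hd HK. destruct (mean_value f df v u Hd) as [c [Hc ->]].
  rewrite Rabs_mult. apply Rmult_le_compat_r; [apply Rabs_pos|].
  apply HK. now rewrite Rmin_comm, Rmax_comm.
Qed.

Lemma exp_lipschitz_le M p1 p2 : p1 <= M -> p2 <= M ->
  Rabs (exp p1 - exp p2) <= exp M * Rabs (p1 - p2).
Proof.
  intros H1 H2. apply (lipschitz_of_derive_bound exp exp).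
  - intros x. apply is_derive_Reals, derivable_pt_lim_exp.
  - intros x Hx. rewrite Rabs_pos_eq by (apply Rlt_le, exp_pos).
    assert (x <= M) by (apply Rle_trans with (Rmax p1 p2); [lra|now apply Rmax_lub]).
    destruct (Req_dec x M) as [->|]; [lra|apply Rlt_le, exp_increasing; lra].
Qed.

Lemma lipschitz_on_box_exp n a b E : a <= b -> lipschitz_on_box n a b E ->
  lipschitz_on_box n a b (fun x => exp (E x)).
Proof.
  intros Hab [L [HL HE]].
  assert (Ha : in_box n a b (cst a)) by (intros k _; unfold cst; lra).
  set (M := E (cst a) + L * (INR n * (b - a))).
  assert (HM : forall x, in_box n a b x -> E x <= M).
  { intros x Hx. assert (Hd : dist1 n x (cst a) <= INR n * (b - a)).
    { unfold dist1. rewrite <- rsum_const. apply rsum_le. intros k Hk.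
      specialize (Hx k Hk). unfold cst. rewrite Rabs_pos_eq; lra. }
    specialize (HE x (cst a) Hx Ha). pose proof (Rle_abs (E x - E (cst a))).
    pose proof (Rmult_le_compat_l L _ _ HL Hd). unfold M. lra. }
  exists (exp M * L). split; [apply Rmult_le_pos; [apply Rlt_le, exp_pos|exact HL]|].
  intros x y Hx Hy. eapply Rle_trans; [apply exp_lipschitz_le; apply HM; assumption|].
  rewrite Rmult_assoc. apply Rmult_le_compat_l; [apply Rlt_le, exp_pos|]. now apply HE.
Qed.

Lemma cosh_pos x : 0 < cosh x.
Proof. unfold cosh. pose proof (exp_pos x). pose proof (exp_pos (- x)). lra. Qed.

Lemma tanh_exp x : tanh x = 1 - 2 / (exp (2 * x) + 1).
Proof.
  unfold tanh, sinh, cosh. rewrite exp_Ropp.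
  replace (2 * x) with (x + x) by ring. rewrite exp_plus.
  pose proof (exp_pos x). field. nra.
Qed.

Lemma tanh_bounds x : -1 < tanh x < 1.
Proof.
  rewrite tanh_exp. pose proof (exp_pos (2 * x)).
  assert (0 < 2 / (exp (2 * x) + 1) < 2).
  { split; [apply Rdiv_lt_0_compat; lra|].
    apply Rmult_lt_reg_r with (exp (2 * x) + 1); [lra|]. field_simplify; lra. }
  lra.
Qed.

Lemma tanh_0 : tanh 0 = 0.
Proof. rewrite tanh_exp, Rmult_0_r, exp_0. field. Qed.

Lemma tanh_ge_ratio y : 0 <= y -> y / (1 + y) <= tanh y.
Proof.
  intros Hy. rewrite tanh_exp. pose proof (exp_ineq1_le (2 * y)).
  replace (y / (1 + y)) with (1 - 2 / (2 + 2 * y)) by (field; lra).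
  apply Rplus_le_compat_l, Ropp_le_contravar. unfold Rdiv.
  apply Rmult_le_compat_l; [lra|]. apply Rinv_le_contravar; lra.
Qed.

Lemma is_derive_tanh x : is_derive tanh x (1 - tanh x ^ 2).
Proof.
  pose proof (cosh_pos x) as Hc. unfold tanh, sinh, cosh in *. auto_derive; [lra|field; lra].
Qed.

Lemma is_derive_ln_cosh x : is_derive (fun x => ln (cosh x)) x (tanh x).
Proof.
  pose proof (cosh_pos x) as Hc. unfold tanh, sinh, cosh in *. auto_derive; [lra|field; lra].
Qed.

Lemma tanh_le x y : x <= y -> tanh x <= tanh y.
Proof.
  intros Hxy. destruct (mean_value tanh (fun x => 1 - tanh x ^ 2) x y is_derive_tanh)
    as [c [_ E]].
  pose proof (tanh_bounds c).
  assert (0 <= (1 - tanh c ^ 2) * (y - x)) by (apply Rmult_le_pos; nra).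
  lra.
Qed.

Lemma ln_cosh_lipschitz u v : Rabs (ln (cosh u) - ln (cosh v)) <= Rabs (u - v).
Proof.
  rewrite <- (Rmult_1_l (Rabs (u - v))).
  apply (lipschitz_of_derive_bound (fun x => ln (cosh x)) tanh); [apply is_derive_ln_cosh|].
  intros x _. pose proof (tanh_bounds x). apply Rabs_le. lra.
Qed.

Lemma tanh_lipschitz_from u0 q x y : 0 <= u0 -> 1 - tanh u0 ^ 2 <= q ->
  u0 <= x -> u0 <= y -> Rabs (tanh x - tanh y) <= q * Rabs (x - y).
Proof.
  intros Hu0 Hq Hx Hy. apply (lipschitz_of_derive_bound _ _ _ _ _ is_derive_tanh).
  intros c Hc. assert (u0 <= c) by (apply Rle_trans with (Rmin x y); [now apply Rmin_glb|lra]).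
  pose proof (tanh_le 0 u0 Hu0). pose proof (tanh_le u0 c H). rewrite tanh_0 in *.
  pose proof (tanh_bounds c). apply Rabs_le. nra.
Qed.

(* Convex on [u0, +oo) when 1 - tanh u0 ^ 2 <= q: its derivative q u - tanh u is
   nondecreasing there. *)
Definition ln_cosh_gap (q u : R) : R := q / 2 * u ^ 2 - ln (cosh u).

Lemma is_derive_ln_cosh_gap q u : is_derive (ln_cosh_gap q) u (q * u - tanh u).
Proof.
  pose proof (cosh_pos u) as Hc. unfold ln_cosh_gap, tanh, sinh, cosh in *.
  auto_derive; [lra|field; lra].
Qed.

Lemma ln_cosh_gap_tangent u0 q x y : 0 <= u0 -> 1 - tanh u0 ^ 2 <= q -> u0 <= x -> u0 <= y ->
  ln_cosh_gap q x + (q * x - tanh x) * (y - x) <= ln_cosh_gap q y.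
Proof.
  intros Hu0 Hq Hx Hy.
  destruct (mean_value _ _ x y (is_derive_ln_cosh_gap q)) as [c [Hc E]].
  assert (Hc0 : u0 <= c) by (apply Rle_trans with (Rmin x y); [now apply Rmin_glb|lra]).
  pose proof (tanh_lipschitz_from u0 q c x Hu0 Hq Hc0 Hx) as Ht.
  destruct (Rle_dec x y) as [Hxy|Hxy].
  - rewrite Rmin_left, Rmax_right in Hc by lra.
    rewrite Rabs_pos_eq with (x := c - x) in Ht by lra. pose proof (Rle_abs (tanh c - tanh x)).
    nra.
  - rewrite Rmin_right, Rmax_left in Hc by lra.
    rewrite Rabs_minus_sym, (Rabs_minus_sym c), Rabs_pos_eq with (x := x - c) in Ht by lra.
    pose proof (Rle_abs (tanh x - tanh c)). nra.
Qed.

Lemma ln_cosh_convexity_defect u0 q a b l : 0 <= u0 -> 1 - tanh u0 ^ 2 <= q ->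
  u0 <= a -> u0 <= b -> 0 <= l <= 1 ->
  l * ln (cosh a) + (1 - l) * ln (cosh b) - ln (cosh (l * a + (1 - l) * b))
  <= q / 2 * l * (1 - l) * (a - b) ^ 2.
Proof.
  intros Hu0 Hq Ha Hb Hl. set (z := l * a + (1 - l) * b).
  assert (Hz : u0 <= z) by (unfold z; nra).
  pose proof (Rmult_le_compat_l l _ _ (proj1 Hl) (ln_cosh_gap_tangent u0 q z a Hu0 Hq Hz Ha)).
  pose proof (Rmult_le_compat_l (1 - l) _ _ ltac:(lra) (ln_cosh_gap_tangent u0 q z b Hu0 Hq Hz Hb)).
  unfold ln_cosh_gap in *.
  assert (l * (a - z) + (1 - l) * (b - z) = 0) by (unfold z; ring).
  assert (z ^ 2 = l * a ^ 2 + (1 - l) * b ^ 2 - l * (1 - l) * (a - b) ^ 2) by (unfold z; ring).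
  set (G := q * z - tanh z) in *. clearbody z G. nra.
Qed.

Lemma cosh_minus_1 x : cosh x - 1 = (exp x - 1) ^ 2 / (2 * exp x).
Proof. unfold cosh. rewrite exp_Ropp. pose proof (exp_pos x). field. lra. Qed.

Lemma cosh_gt_1 x : 0 < x -> 1 < cosh x.
Proof.
  intros Hx. pose proof (exp_pos x). pose proof (exp_increasing 0 x Hx). rewrite exp_0 in *.
  assert (0 < (exp x - 1) ^ 2 / (2 * exp x)) by (apply Rdiv_lt_0_compat; nra).
  rewrite <- cosh_minus_1 in *. lra.
Qed.

Lemma sinh_ge_id y : 0 <= y -> y <= sinh y.
Proof.
  intros Hy. assert (Hd : forall x, is_derive (fun x => sinh x - x) x (cosh x - 1)).
  { intros x. unfold sinh, cosh. auto_derive; [easy|field]. }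
  destruct (mean_value _ _ 0 y Hd) as [c [_ E]].
  assert (0 <= (cosh c - 1) * (y - 0)).
  { apply Rmult_le_pos; [|lra]. rewrite cosh_minus_1.
    pose proof (exp_pos c). apply Rdiv_le_0_compat; [apply pow2_ge_0|lra]. }
  rewrite sinh_0 in E. lra.
Qed.

Lemma tanh_fixed_point_exists g : 1 < g -> exists x, 0 < x /\ x = tanh (g * x).
Proof.
  intros Hg. set (h := fun x => x - tanh (g * x)).
  assert (Hh : continuity h).
  { intros x. apply continuity_pt_minus; [apply continuity_pt_id|].
    apply (continuity_pt_comp (fun x => g * x) tanh); [reg|].
    apply derivable_continuous_pt. eexists. apply is_derive_Reals, is_derive_tanh. }
  set (eps := (g - 1) / (2 * g)).
  assert (Heps : 0 < eps < 1) by (unfold eps; split; apply Rmult_lt_reg_r with (2 * g);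
    try lra; field_simplify; lra).
  assert (Hneg : h eps < 0).
  { unfold h. pose proof (tanh_ge_ratio (g * eps) ltac:(nra)).
    assert (eps < g * eps / (1 + g * eps)); [|lra].
    apply Rmult_lt_reg_r with (1 + g * eps); [nra|]. field_simplify; [|nra].
    assert (g * eps = (g - 1) / 2) by (unfold eps; field; lra). nra. }
  assert (Hpos : 0 < h 1) by (unfold h; pose proof (tanh_bounds (g * 1)); lra).
  destruct (IVT h eps 1 Hh (proj2 Heps) Hneg Hpos) as [z [Hz Hz0]].
  exists z. unfold h in Hz0. split; lra.
Qed.

(* With y = g m: g (1 - m^2) = y / (sinh y cosh y) < 1. *)
Lemma tanh_fixed_point_slope g m : 0 < m -> m = tanh (g * m) -> g * (1 - m ^ 2) < 1.
Proof.
  intros Hm Hfix. set (y := g * m) in Hfix.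
  assert (Hy : 0 < y).
  { destruct (Rlt_le_dec 0 y) as [|Hy]; [easy|].
    pose proof (tanh_le y 0 Hy). rewrite tanh_0 in *. lra. }
  pose proof (cosh_pos y). pose proof (cosh_gt_1 y Hy). pose proof (sinh_ge_id y (Rlt_le _ _ Hy)).
  assert (Hms : m * cosh y = sinh y) by (rewrite Hfix; unfold tanh; field; lra).
  assert (Hcs : cosh y ^ 2 - sinh y ^ 2 = 1).
  { unfold cosh, sinh. rewrite exp_Ropp. pose proof (exp_pos y). field. lra. }
  assert (Hkey : y < sinh y * cosh y) by nra.
  assert (E : g * (1 - m ^ 2) * (m * cosh y ^ 2) = y).
  { replace (g * (1 - m ^ 2) * (m * cosh y ^ 2)) with (y * (cosh y ^ 2 - (m * cosh y) ^ 2))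
      by (unfold y; ring).
    rewrite Hms, Hcs. ring. }
  assert (0 < m * cosh y ^ 2) by (apply Rmult_lt_0_compat; nra).
  apply Rmult_lt_reg_r with (m * cosh y ^ 2); [easy|]. nra.
Qed.

Lemma largest_tanh_fixed_point g m : 1 < g -> m = tanh (g * m) ->
  (forall x, x = tanh (g * x) -> x <= m) -> 0 < m < 1 /\ g * (1 - m ^ 2) < 1.
Proof.
  intros Hg Hfix Hmax.
  destruct (tanh_fixed_point_exists g Hg) as [x [Hx Hxfix]].
  assert (Hm : 0 < m) by (pose proof (Hmax x Hxfix); lra).
  pose proof (tanh_bounds (g * m)).
  split; [lra|]. now apply tanh_fixed_point_slope.
Qed.

Lemma curvature_margin g m : 0 < g -> 0 < m -> g * (1 - m ^ 2) < 1 ->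
  exists e, 0 < e < m /\ g * (1 - (m - e) ^ 2) < 1.
Proof.
  intros Hg Hm Hslope. set (d := 1 - g * (1 - m ^ 2)).
  set (e := Rmin (m / 2) (d / (4 * g * m))).
  assert (He : 0 < e) by (apply Rmin_glb_lt; apply Rdiv_lt_0_compat; unfold d; nra).
  assert (Hem : e <= m / 2) by apply Rmin_l.
  assert (Hed : 4 * g * m * e <= d).
  { apply Rle_trans with (4 * g * m * (d / (4 * g * m))).
    - apply Rmult_le_compat_l; [nra|apply Rmin_r].
    - right. field. lra. }
  assert (E : g * (1 - (m - e) ^ 2) = (1 - d) + 2 * g * m * e - g * e ^ 2) by (unfold d; ring).
  assert (0 <= g * e ^ 2) by nra.
  exists e. split; [lra|]. unfold d in *. lra.
Qed.

Lemma Amul_lincomb s alpha beta l z w k :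
  Amul s alpha beta (lincomb l z w) k = l * Amul s alpha beta z k + (1 - l) * Amul s alpha beta w k.
Proof. unfold Amul, lincomb. ring. Qed.

Lemma Amul_sub s alpha beta z w k :
  Amul s alpha beta (fun j => z j - w j) k = Amul s alpha beta z k - Amul s alpha beta w k.
Proof. unfold Amul. ring. Qed.

Lemma phiN_sum s alpha beta x : phiN s alpha beta x =
  rsum s (fun k => / 2 * (x k * Amul s alpha beta x k) - ln (cosh (Amul s alpha beta x k))).
Proof. unfold phiN, dot. now rewrite rsum_minus, rsum_scal. Qed.

Definition Aq_form s alpha beta q (v : nat -> R) : R :=
  rsum s (fun k => v k * Amul s alpha beta v k - q * Amul s alpha beta v k ^ 2).

Lemma phiN_convexity_defect s alpha beta u0 q z w l : 0 <= u0 -> 1 - tanh u0 ^ 2 <= q ->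
  (forall k, (k < s)%nat -> u0 <= Amul s alpha beta z k) ->
  (forall k, (k < s)%nat -> u0 <= Amul s alpha beta w k) -> 0 <= l <= 1 ->
  phiN s alpha beta (lincomb l z w)
  <= l * phiN s alpha beta z + (1 - l) * phiN s alpha beta w
     - l * (1 - l) / 2 * Aq_form s alpha beta q (fun j => z j - w j).
Proof.
  intros Hu0 Hq Hz Hw Hl. rewrite !phiN_sum. unfold Aq_form.
  rewrite <- !rsum_scal, <- rsum_plus, <- rsum_minus. apply rsum_le. intros k Hk.
  rewrite Amul_lincomb, Amul_sub. unfold lincomb.
  pose proof (ln_cosh_convexity_defect u0 q _ _ l Hu0 Hq (Hz k Hk) (Hw k Hk) Hl).
  set (a := Amul s alpha beta z k) in *. set (b := Amul s alpha beta w k) in *.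
  set (gm := ln (cosh (l * a + (1 - l) * b))) in *.
  set (ga := ln (cosh a)) in *. set (gb := ln (cosh b)) in *.
  nra.
Qed.

Section Circulant.

Variables (s : nat) (alpha beta : R).
Hypothesis Hs : (0 < s)%nat.

Lemma mod_lt j : (j mod s < s)%nat.
Proof. apply Nat.mod_upper_bound. lia. Qed.

Lemma Amul_depends_on x y k : (forall j, (j < s)%nat -> x j = y j) -> (k < s)%nat ->
  Amul s alpha beta x k = Amul s alpha beta y k.
Proof. intros H Hk. unfold Amul. rewrite !H; auto using mod_lt. Qed.

Lemma phiN_depends_on : depends_on s (phiN s alpha beta).
Proof.
  intros x y H. rewrite !phiN_sum. apply rsum_ext. intros k Hk.
  now rewrite H, (Amul_depends_on x y k).
Qed.

Definition neighbour_sum (v : nat -> R) (k : nat) : R :=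
  v ((k + 1) mod s)%nat + v ((k + s - 1) mod s)%nat.

Lemma rsum_neighbour_squares v c :
  rsum s (fun k => c * (v ((k + 1) mod s)%nat * v ((k + 1) mod s)%nat)
                   + c * (v ((k + s - 1) mod s)%nat * v ((k + s - 1) mod s)%nat))
  = 2 * c * sqnorm s v.
Proof.
  rewrite rsum_plus, !rsum_scal, (rsum_rot_next s (fun j => v j * v j) Hs),
    (rsum_rot_prev s (fun j => v j * v j) Hs).
  unfold sqnorm, dot. ring.
Qed.

Lemma neighbour_sum_dot_bound v : Rabs (dot s v (neighbour_sum v)) <= 2 * sqnorm s v.
Proof.
  eapply Rle_trans; [apply rsum_abs|].
  replace (2 * sqnorm s v) with (sqnorm s v + 2 * / 2 * sqnorm s v) by field.
  rewrite <- rsum_neighbour_squares. unfold sqnorm, dot. rewrite <- rsum_plus.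
  apply rsum_le. intros k _. unfold neighbour_sum. apply Rabs_le.
  pose proof (pow2_ge_0 (v k + v ((k + 1) mod s)%nat)).
  pose proof (pow2_ge_0 (v k + v ((k + s - 1) mod s)%nat)).
  pose proof (pow2_ge_0 (v k - v ((k + 1) mod s)%nat)).
  pose proof (pow2_ge_0 (v k - v ((k + s - 1) mod s)%nat)).
  split; nra.
Qed.

Lemma neighbour_sum_sqnorm_le v : sqnorm s (neighbour_sum v) <= 4 * sqnorm s v.
Proof.
  replace (4 * sqnorm s v) with (2 * 2 * sqnorm s v) by ring.
  rewrite <- rsum_neighbour_squares. apply rsum_le. intros k _. unfold neighbour_sum.
  pose proof (pow2_ge_0 (v ((k + 1) mod s)%nat - v ((k + s - 1) mod s)%nat)). nra.
Qed.

(* The bounds on the neighbour sum place the spectrum of A in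
   [beta - 2 alpha, beta + 2 alpha]; the estimate then follows from the
   concavity of x - q x^2 for q >= 0. *)
Lemma Aq_form_lower_bound q mu v : 0 <= q ->
  mu <= (beta - 2 * alpha) - q * (beta - 2 * alpha) ^ 2 ->
  mu <= (beta + 2 * alpha) - q * (beta + 2 * alpha) ^ 2 ->
  mu * sqnorm s v <= Aq_form s alpha beta q v.
Proof.
  intros Hq Hmu1 Hmu2.
  set (n2 := sqnorm s v). set (p := dot s v (neighbour_sum v)).
  set (T := sqnorm s (neighbour_sum v)).
  assert (E : Aq_form s alpha beta q v
              = (beta - q * beta ^ 2) * n2 + (alpha - 2 * q * alpha * beta) * p
                - q * alpha ^ 2 * T).
  { unfold Aq_form, n2, p, T, sqnorm, dot.
    rewrite <- !rsum_scal, <- rsum_plus, <- rsum_minus. apply rsum_ext. intros k _.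
    unfold Amul, neighbour_sum. ring. }
  assert (Hp : - (2 * n2) <= p <= 2 * n2) by apply Rabs_le_between, neighbour_sum_dot_bound.
  assert (HT : T <= 4 * n2) by apply neighbour_sum_sqnorm_le.
  assert (Hn2 : 0 <= n2) by (apply rsum_nonneg; intros; nra).
  set (a := beta - 2 * alpha) in *. set (b := beta + 2 * alpha) in *.
  assert (Id : (beta - q * beta ^ 2) * n2 + (alpha - 2 * q * alpha * beta) * p
               - q * alpha ^ 2 * (4 * n2)
             = (2 * n2 - p) / 4 * (a - q * a ^ 2) + (2 * n2 + p) / 4 * (b - q * b ^ 2))
    by (unfold a, b; field).
  assert (q * alpha ^ 2 * (4 * n2 - T) >= 0) by (apply Rle_ge, Rmult_le_pos; nra).
  assert ((2 * n2 - p) / 4 * mu <= (2 * n2 - p) / 4 * (a - q * a ^ 2))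
    by (apply Rmult_le_compat_l; lra).
  assert ((2 * n2 + p) / 4 * mu <= (2 * n2 + p) / 4 * (b - q * b ^ 2))
    by (apply Rmult_le_compat_l; lra).
  rewrite E. nra.
Qed.

Lemma Amul_abs_le x B k : (forall j, (j < s)%nat -> Rabs (x j) <= B) -> (k < s)%nat ->
  Rabs (Amul s alpha beta x k) <= (Rabs beta + 2 * Rabs alpha) * B.
Proof.
  intros Hx Hk. unfold Amul.
  pose proof (Hx k Hk). pose proof (Hx _ (mod_lt (k + 1))). pose proof (Hx _ (mod_lt (k + s - 1))).
  pose proof (Rabs_pos alpha). pose proof (Rabs_pos beta).
  eapply Rle_trans; [apply Rabs_triang|]. rewrite !Rabs_mult.
  pose proof (Rabs_triang (x ((k + 1) mod s)%nat) (x ((k + s - 1) mod s)%nat)).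
  assert (Rabs beta * Rabs (x k) <= Rabs beta * B) by (apply Rmult_le_compat_l; lra).
  assert (Rabs alpha * Rabs (x ((k + 1) mod s)%nat + x ((k + s - 1) mod s)%nat)
          <= Rabs alpha * (2 * B)) by (apply Rmult_le_compat_l; lra).
  lra.
Qed.

Lemma phiN_lipschitz B : 0 <= B -> exists L, 0 <= L /\ forall z w,
  (forall k, (k < s)%nat -> Rabs (z k) <= B) -> (forall k, (k < s)%nat -> Rabs (w k) <= B) ->
  Rabs (phiN s alpha beta z - phiN s alpha beta w) <= L * dist1 s z w.
Proof.
  intros HB. set (G := Rabs beta + 2 * Rabs alpha).
  assert (HG : 0 <= G) by (unfold G; pose proof (Rabs_pos alpha); pose proof (Rabs_pos beta); lra).
  exists (/ 2 * G * B + INR s * (/ 2 * B * G + G)).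
  assert (0 <= / 2 * G * B) by (apply Rmult_le_pos; lra).
  assert (0 <= / 2 * B * G) by (apply Rmult_le_pos; lra).
  split; [apply Rplus_le_le_0_compat, Rmult_le_pos; [|apply pos_INR|]; lra|].
  intros z w Hz Hw. set (D := dist1 s z w).
  assert (HD : forall j, (j < s)%nat -> Rabs (z j - w j) <= D)
    by (intros j Hj; apply (rsum_ge_term s (fun k => Rabs (z k - w k))); auto using Rabs_pos).
  assert (HD0 : 0 <= D) by apply dist1_nonneg.
  rewrite !phiN_sum, <- rsum_minus. eapply Rle_trans; [apply rsum_abs|].
  apply Rle_trans
    with (rsum s (fun k => / 2 * G * B * Rabs (z k - w k) + (/ 2 * B * G * D + G * D))).
  - apply rsum_le. intros k Hk.
    assert (Ha : Rabs (Amul s alpha beta z k) <= G * B) by exact (Amul_abs_le z B k Hz Hk).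
    assert (Hab : Rabs (Amul s alpha beta z k - Amul s alpha beta w k) <= G * D)
      by (rewrite <- Amul_sub; exact (Amul_abs_le _ D k HD Hk)).
    set (a := Amul s alpha beta z k) in *. set (b := Amul s alpha beta w k) in *.
    pose proof (ln_cosh_lipschitz a b). pose proof (Hw k Hk) as Hwk.
    replace (/ 2 * (z k * a) - ln (cosh a) - (/ 2 * (w k * b) - ln (cosh b)))
      with (/ 2 * ((z k - w k) * a) + / 2 * (w k * (a - b)) - (ln (cosh a) - ln (cosh b)))
      by ring.
    eapply Rle_trans; [apply Rabs_triang|]. rewrite Rabs_Ropp.
    eapply Rle_trans; [apply Rplus_le_compat_r, Rabs_triang|]. rewrite !Rabs_mult.
    rewrite Rabs_pos_eq with (x := / 2) by lra.
    pose proof (Rmult_le_compat_l _ _ _ (Rabs_pos (z k - w k)) Ha).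
    pose proof (Rmult_le_compat _ _ _ _ (Rabs_pos (w k)) (Rabs_pos (a - b)) Hwk Hab).
    lra.
  - rewrite rsum_plus, rsum_scal, rsum_const. right. fold (dist1 s z w) D. ring.
Qed.

Lemma Amul_ge_on_box lo hi x k : 0 <= alpha -> 0 <= beta ->
  in_box s lo hi x -> (k < s)%nat -> (beta + 2 * alpha) * lo <= Amul s alpha beta x k.
Proof.
  intros Hal Hbe Hx Hk. unfold Amul.
  pose proof (Hx k Hk). pose proof (Hx _ (mod_lt (k + 1))).
  pose proof (Hx _ (mod_lt (k + s - 1))). nra.
Qed.

Lemma phiN_strong_convexity u0 q mu z w l : 0 <= u0 -> 1 - tanh u0 ^ 2 <= q ->
  mu <= (beta - 2 * alpha) - q * (beta - 2 * alpha) ^ 2 ->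
  mu <= (beta + 2 * alpha) - q * (beta + 2 * alpha) ^ 2 ->
  (forall k, (k < s)%nat -> u0 <= Amul s alpha beta z k) ->
  (forall k, (k < s)%nat -> u0 <= Amul s alpha beta w k) -> 0 <= l <= 1 ->
  phiN s alpha beta (lincomb l z w)
  <= l * phiN s alpha beta z + (1 - l) * phiN s alpha beta w
     - mu / 2 * l * (1 - l) * sqnorm s (fun k => z k - w k).
Proof.
  intros Hu0 Hq Hmu1 Hmu2 Hz Hw Hl.
  assert (Hq0 : 0 <= q) by (pose proof (tanh_bounds u0); nra).
  pose proof (phiN_convexity_defect s alpha beta u0 q z w l Hu0 Hq Hz Hw Hl).
  pose proof (Aq_form_lower_bound q mu (fun k => z k - w k) Hq0 Hmu1 Hmu2) as HQ.
  assert (Hll : 0 <= l * (1 - l) / 2) by (apply Rmult_le_pos; nra).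
  pose proof (Rmult_le_compat_l _ _ _ Hll HQ).
  lra.
Qed.

End Circulant.

Lemma dot_depends_on s t : depends_on s (dot s t).
Proof. intros x y H. apply rsum_ext. intros k Hk. now rewrite H. Qed.

Lemma dot_affine s t m u y : dot s t (fun k => m + u * y k) = dot s t (cst m) + u * dot s t y.
Proof. unfold dot, cst. rewrite <- rsum_scal, <- rsum_plus. apply rsum_ext. intros. ring. Qed.

Lemma dot_cst0 s y : dot s (cst 0) y = 0.
Proof.
  unfold dot, cst. rewrite (rsum_ext s _ (fun _ => 0)) by (intros; ring).
  rewrite rsum_const. ring.
Qed.

Lemma sqrt_div_mul_flip p q : 0 < p -> 0 < q -> sqrt (p / q) * sqrt (q / p) = 1.
Proof.
  intros Hp Hq. rewrite <- sqrt_mult_alt by (apply Rlt_le, Rdiv_lt_0_compat; lra).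
  replace (p / q * (q / p)) with 1 by (field; lra). apply sqrt_1.
Qed.

Section Density.

Variables (s N : nat) (alpha beta mstar r : R).
Hypotheses (Hs : (0 < s)%nat) (HN : (0 < N)%nat) (Hr : 0 < r).

Let c := INR N / INR s.
Let u := sqrt (INR s / INR N).
Let R0 := rho_box_radius s N r.
Let rho := rho_core s N alpha beta mstar.
Let Z := rho_Z s N alpha beta mstar r.

Lemma ratio_pos : 0 < c /\ 0 < INR s / INR N.
Proof.
  pose proof (lt_0_INR _ Hs). pose proof (lt_0_INR _ HN).
  split; apply Rdiv_lt_0_compat; lra.
Qed.

Lemma u_pos : 0 < u.
Proof. apply sqrt_lt_R0, ratio_pos. Qed.

Lemma u_mul_sqrt_c : u * sqrt c = 1.
Proof. apply sqrt_div_mul_flip; apply lt_0_INR; assumption. Qed.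

Lemma c_mul_u_sq : c * u ^ 2 = 1.
Proof.
  destruct ratio_pos. unfold u. rewrite <- Rsqr_pow2, Rsqr_sqrt by lra.
  unfold c. field. split; apply not_0_INR; lia.
Qed.

Lemma scale_radius : u * R0 = r.
Proof. unfold R0, rho_box_radius. fold c. rewrite <- Rmult_assoc, u_mul_sqrt_c. ring. Qed.

Lemma radius_pos : 0 < R0.
Proof. apply Rmult_lt_0_compat; [apply sqrt_lt_R0, ratio_pos|exact Hr]. Qed.

(* The substitution x = mstar + sqrt (s / N) y maps [-R0, R0]^s onto
   [mstar - r, mstar + r]^s, and its Jacobian cancels the prefactor of J_N. *)
Lemma JN_box_integral t :
  JN s N alpha beta t r mstar = boxint s (- R0) R0 (fun y => exp (dot s t y) * rho y).
Proof.
  pose proof u_pos. pose proof radius_pos.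
  unfold JN. cbv zeta. fold c.
  replace (mstar - r) with (u * - R0 + mstar) by (rewrite <- scale_radius; ring).
  replace (mstar + r) with (u * R0 + mstar) by (rewrite <- scale_radius; ring).
  rewrite boxint_affine by (lra || (intros x y Hxy;
    now rewrite (phiN_depends_on s alpha beta Hs x y Hxy), (dot_depends_on s t x y Hxy))).
  assert (Hpow : sqrt c ^ s * u ^ s = 1)
    by (rewrite <- Rpow_mult_distr, Rmult_comm, u_mul_sqrt_c; apply pow1).
  rewrite <- boxint_scal, <- boxint_scal.
  apply boxint_ext; [lra|]. intros y _.
  unfold rho, rho_core. cbv zeta. fold c u. rewrite dot_affine.
  match goal with |- ?A * ?B * (?C * ?F) = _ =>
    replace (A * B * (C * F)) with ((A * C) * (B * F)) by ring end.
  rewrite Hpow, Rmult_1_l, <- !exp_plus. f_equal.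
  replace (sqrt c * (dot s t (cst mstar) + u * dot s t y))
    with (sqrt c * dot s t (cst mstar) + (u * sqrt c) * dot s t y) by ring.
  rewrite u_mul_sqrt_c. ring.
Qed.

Lemma rho_core_lipschitz : lipschitz_on_box s (- R0) R0 rho.
Proof.
  destruct ratio_pos as [Hc _]. pose proof u_pos. pose proof radius_pos.
  assert (Hb : forall x, in_box s (- R0) R0 x -> forall k, (k < s)%nat ->
            Rabs (mstar + u * x k) <= Rabs mstar + u * R0).
  { intros x Hx k Hk. eapply Rle_trans; [apply Rabs_triang|].
    rewrite Rabs_mult, (Rabs_pos_eq u) by lra.
    assert (Rabs (x k) <= R0) by (apply Rabs_le, Hx, Hk). nra. }
  destruct (phiN_lipschitz s alpha beta Hs (Rabs mstar + u * R0)) as [L [HL HLip]].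
  { pose proof (Rabs_pos mstar). nra. }
  unfold rho, rho_core. cbv zeta. fold c u. apply lipschitz_on_box_exp; [lra|].
  exists (c * L * u). split; [apply Rmult_le_pos; [apply Rmult_le_pos|]; lra|].
  intros x y Hx Hy.
  replace (- c * (phiN s alpha beta (fun k => mstar + u * x k) - phiN s alpha beta (cst mstar))
           - - c * (phiN s alpha beta (fun k => mstar + u * y k) - phiN s alpha beta (cst mstar)))
    with (- c * (phiN s alpha beta (fun k => mstar + u * x k)
                 - phiN s alpha beta (fun k => mstar + u * y k))) by ring.
  rewrite Rabs_mult, Rabs_Ropp, (Rabs_pos_eq c) by lra.
  pose proof (HLip _ _ (Hb x Hx) (Hb y Hy)) as Hxy. rewrite dist1_affine in Hxy by lra.
  replace (c * L * u * dist1 s x y) with (c * (L * (u * dist1 s x y))) by ring.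
  apply Rmult_le_compat_l; lra.
Qed.

Lemma rho_Z_box_integral : Z = boxint s (- R0) R0 rho.
Proof. reflexivity. Qed.

Lemma rho_Z_pos : 0 < Z.
Proof.
  pose proof radius_pos. rewrite rho_Z_box_integral.
  apply boxint_pos; [lra|apply rho_core_lipschitz|]. intros x _. apply exp_pos.
Qed.

Lemma rhoN_on_box x : in_box s (- R0) R0 x -> rhoN s N alpha beta mstar r x = rho x / Z.
Proof.
  intros Hx. unfold rhoN. cbv zeta. fold R0.
  destruct excluded_middle_informative; [apply Rmult_1_r|contradiction].
Qed.

Lemma rhoN_off_box x : ~ in_box s (- R0) R0 x -> rhoN s N alpha beta mstar r x = 0.
Proof.
  intros Hx. unfold rhoN. cbv zeta. fold R0.
  destruct excluded_middle_informative; [contradiction|apply Rmult_0_r].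
Qed.

Lemma JN_ratio_expect_exp t :
  JN s N alpha beta t r mstar / JN s N alpha beta (cst 0) r mstar
  = expect_exp s N alpha beta mstar r t.
Proof.
  pose proof radius_pos. pose proof rho_Z_pos.
  assert (HJ0 : JN s N alpha beta (cst 0) r mstar = Z).
  { rewrite JN_box_integral, rho_Z_box_integral. apply boxint_ext; [lra|].
    intros y _. rewrite dot_cst0, exp_0. apply Rmult_1_l. }
  rewrite HJ0, JN_box_integral. unfold expect_exp. cbv zeta. fold R0.
  rewrite (boxint_ext s _ _ (fun x => exp (dot s t x) * rhoN s N alpha beta mstar r x)
             (fun x => / Z * (exp (dot s t x) * rho x)))
    by (lra || (intros x Hx; rewrite rhoN_on_box by exact Hx; unfold Rdiv; ring)).
  rewrite boxint_scal. field. lra.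
Qed.

Lemma rhoN_mass : boxint s (- R0) R0 (rhoN s N alpha beta mstar r) = 1.
Proof.
  pose proof radius_pos. pose proof rho_Z_pos.
  rewrite (boxint_ext s _ _ _ (fun x => / Z * rho x))
    by (lra || (intros x Hx; rewrite rhoN_on_box by exact Hx; unfold Rdiv; ring)).
  rewrite boxint_scal, <- rho_Z_box_integral. field. lra.
Qed.

(* The potential inherits the modulus mu of phi_N because (N/s) (sqrt (s/N))^2 = 1. *)
Lemma rhoN_strongly_log_concave u0 q mu : 0 <= u0 -> 1 - tanh u0 ^ 2 <= q -> 0 < mu ->
  mu <= (beta - 2 * alpha) - q * (beta - 2 * alpha) ^ 2 ->
  mu <= (beta + 2 * alpha) - q * (beta + 2 * alpha) ^ 2 ->
  (forall x, in_box s (mstar - r) (mstar + r) x ->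
     forall k, (k < s)%nat -> u0 <= Amul s alpha beta x k) ->
  strongly_log_concave s (rhoN s N alpha beta mstar r).
Proof.
  intros Hu0 Hq Hmu Hmu1 Hmu2 Hregion.
  destruct ratio_pos as [Hc _]. pose proof u_pos. pose proof rho_Z_pos.
  set (z := fun (x : nat -> R) (k : nat) => mstar + u * x k).
  assert (Hz : forall x, in_box s (- R0) R0 x -> in_box s (mstar - r) (mstar + r) (z x)).
  { intros x Hx k Hk. unfold z. rewrite <- scale_radius.
    specialize (Hx k Hk). split; nra. }
  exists (in_box s (- R0) R0),
    (fun x => c * (phiN s alpha beta (z x) - phiN s alpha beta (cst mstar)) + ln Z).
  split; [apply in_box_convex|split; [|split]].
  - exists mu. split; [exact Hmu|]. intros x y l Hx Hy Hl.
    assert (Hmid : z (lincomb l x y) = lincomb l (z x) (z y))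
      by (extensionality k; unfold z, lincomb; ring).
    assert (Hsq : sqnorm s (fun k => z x k - z y k) = u ^ 2 * sqnorm s (fun k => x k - y k)).
    { unfold sqnorm, dot. rewrite <- rsum_scal. apply rsum_ext. intros k _. unfold z. ring. }
    pose proof (phiN_strong_convexity s alpha beta Hs u0 q mu (z x) (z y) l Hu0 Hq Hmu1 Hmu2
                  (Hregion _ (Hz x Hx)) (Hregion _ (Hz y Hy)) Hl) as Hconv.
    rewrite <- Hmid, Hsq in Hconv.
    pose proof (Rmult_le_compat_l c _ _ (Rlt_le _ _ Hc) Hconv).
    assert (c * (mu / 2 * l * (1 - l) * (u ^ 2 * sqnorm s (fun k => x k - y k)))
            = mu / 2 * l * (1 - l) * sqnorm s (fun k => x k - y k)).
    { transitivity ((c * u ^ 2) * (mu / 2 * l * (1 - l) * sqnorm s (fun k => x k - y k)));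
        [ring|rewrite c_mul_u_sq; ring]. }
    lra.
  - intros x Hx. rewrite rhoN_on_box by exact Hx.
    rewrite Ropp_plus_distr, exp_plus, (exp_Ropp (ln Z)), exp_ln by assumption.
    unfold Rdiv. f_equal. unfold rho, rho_core, z. cbv zeta. fold c u. f_equal. ring.
  - exact rhoN_off_box.
Qed.

End Density.

Lemma quadratic_margin a b q : 0 < a <= b -> 0 <= q -> q * b < 1 ->
  exists mu, 0 < mu /\ mu <= a - q * a ^ 2 /\ mu <= b - q * b ^ 2.
Proof.
  intros Hab Hq Hqb. exists (Rmin (a - q * a ^ 2) (b - q * b ^ 2)).
  split; [|split; [apply Rmin_l|apply Rmin_r]].
  assert (q * a <= q * b) by (apply Rmult_le_compat_l; lra).
  assert (0 < a * (1 - q * a)) by (apply Rmult_lt_0_compat; lra).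
  assert (0 < b * (1 - q * b)) by (apply Rmult_lt_0_compat; lra).
  apply Rmin_glb_lt; nra.
Qed.

Lemma convexity_radius alpha beta m : 0 < 2 * alpha < beta -> 1 < beta + 2 * alpha ->
  0 < m -> m = tanh ((beta + 2 * alpha) * m) -> (beta + 2 * alpha) * (1 - m ^ 2) < 1 ->
  exists r0 u0 q mu, 0 < r0 /\ 0 <= u0 /\ u0 <= (beta + 2 * alpha) * (m - r0)
    /\ 1 - tanh u0 ^ 2 <= q /\ 0 < mu
    /\ mu <= (beta - 2 * alpha) - q * (beta - 2 * alpha) ^ 2
    /\ mu <= (beta + 2 * alpha) - q * (beta + 2 * alpha) ^ 2.
Proof.
  intros Hab Hg Hm Hfix Hslope. set (g := beta + 2 * alpha) in *.
  destruct (curvature_margin g m ltac:(lra) Hm Hslope) as [e [He Hge]].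
  set (q := 1 - (m - e) ^ 2).
  assert (Hm1 : m < 1) by (rewrite Hfix; apply tanh_bounds).
  assert (Hq0 : 0 <= q) by (unfold q; nra).
  assert (Hqg : q * g < 1) by (unfold q in *; nra).
  destruct (quadratic_margin (beta - 2 * alpha) g q ltac:(unfold g; lra) Hq0 Hqg)
    as [mu [Hmu [Hmu1 Hmu2]]].
  exists (e / g), (g * m - e), q, mu.
  assert (Hgm : m <= g * m) by nra.
  assert (Hu0 : 0 <= g * m - e) by lra.
  assert (Htanh : m - e <= tanh (g * m - e)).
  { assert (Hslope0 : 1 - tanh 0 ^ 2 <= 1) by (rewrite tanh_0; lra).
    pose proof (tanh_lipschitz_from 0 1 (g * m) (g * m - e) (Rle_refl 0) Hslope0
                  ltac:(lra) Hu0) as H.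
    rewrite <- Hfix in H. replace (g * m - (g * m - e)) with e in H by ring.
    rewrite (Rabs_pos_eq e) in H by lra. apply Rabs_le_between in H. lra. }
  repeat split; try assumption.
  - apply Rdiv_lt_0_compat; lra.
  - right. field. lra.
  - unfold q. nra.
Qed.

Theorem lemma7p1 (alpha beta mstar : R) (s : nat) :
  0 < 2 * alpha -> 2 * alpha < beta -> 1 < beta + 2 * alpha -> (0 < s)%nat ->
  mstar = tanh ((beta + 2 * alpha) * mstar) ->
  (forall x, x = tanh ((beta + 2 * alpha) * x) -> x <= mstar) ->
  exists r0, 0 < r0 /\
    forall (N : nat) (t : nat -> R) (r : R), (0 < N)%nat -> 0 < r < r0 ->
      JN s N alpha beta t r mstar / JN s N alpha beta (cst 0) r mstar
        = expect_exp s N alpha beta mstar r t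
      /\ boxint s (- rho_box_radius s N r) (rho_box_radius s N r)
                (rhoN s N alpha beta mstar r) = 1
      /\ strongly_log_concave s (rhoN s N alpha beta mstar r).
Proof.
  intros Hal Hbe Hg Hs Hfix Hmax.
  destruct (largest_tanh_fixed_point _ _ Hg Hfix Hmax) as [[Hm0 _] Hslope].
  destruct (convexity_radius alpha beta mstar ltac:(lra) Hg Hm0 Hfix Hslope)
    as (r0 & u0 & q & mu & Hr0 & Hu0 & Hu0r0 & Hq & Hmu & Hmu1 & Hmu2).
  exists r0. split; [exact Hr0|]. intros N t r HN [Hr Hrr0].
  split; [|split].
  - now apply JN_ratio_expect_exp.
  - now apply rhoN_mass.
  - apply (rhoN_strongly_log_concave s N alpha beta mstar r Hs HN Hr u0 q mu); try assumption.
    intros x Hx k Hk.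
    pose proof (Amul_ge_on_box s alpha beta Hs _ _ x k ltac:(lra) ltac:(lra) Hx Hk). nra.
Qed.
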